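(* There exist continuous increasing convex functions $\Phi:[1,\infty)\to[1,\infty)$ such that $$\int_1^\infty\log\Phi(t)\,\frac{dt}{t^2}=\infty,\qquad \liminf_{t\to\infty}\frac{\log\Phi(t)}{\log t}=1,$$ and $\Phi(t)\ge t$ for all $t\in[1,\infty)$. *)

From HB Require Import structures.
From mathcomp Require Import all_boot all_order all_algebra.
From mathcomp Require Import all_classical all_reals all_analysis.
Set Implicit Arguments. Unset Strict Implicit. Unset Printing Implicit Defensive.
Import Order.TTheory GRing.Theory Num.Theory.
Import numFieldNormedType.Exports.
Local Open Scope classical_set_scope.
Local Open Scope ring_scope.

Definition convex_on_ge1 (R : realType) (f : R -> R) : Prop :=
  forall x y l : R, 1 <= x -> 1 <= y -> 0 <= l -> l <= 1 ->
    f (l * x + (1 - l) * y) <= l * f x + (1 - l) * f y.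

Definition increasing_on_ge1 (R : realType) (f : R -> R) : Prop :=
  forall x y : R, 1 <= x -> x < y -> f x < f y.

From HB Require Import structures.
From mathcomp Require Import all_boot all_order all_algebra.
From mathcomp Require Import all_classical all_reals all_analysis.
From mathcomp Require Import lra measurable_realfun.
Set Implicit Arguments. Unset Strict Implicit. Unset Printing Implicit Defensive.
Import Order.TTheory GRing.Theory Num.Theory.
Import numFieldNormedType.Exports.
Local Open Scope classical_set_scope.
Local Open Scope ring_scope.

(* Phi is t plus a series of hinges c_k (t - a_k)^+ whose kinks a_k >= k + 1
   escape to infinity, so it is a locally finite sum of convex increasing
   continuous functions and Phi t >= t.  The slope c_k = exp (k (a_k + 2)^2)
   makes ln Phi / t^2 >= k on [a_k + 1, a_k + 2], so the integral diverges.
   Before the next kink Phi grows with slope at most s = 1 + c_0 + ... + c_k,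
   and a_(k+1) is chosen >= s^(k+1); hence Phi (a_(k+1)) <= a_(k+1) s gives
   ln Phi / ln t <= 1 + 1/(k+1) at t = a_(k+1), while Phi t >= t gives the
   lower bound 1. *)

Section Hinge.
Variable R : realType.

Definition hinge (a t : R) := Num.max 0 (t - a).

Lemma hinge_ge0 a t : 0 <= hinge a t.
Proof. by rewrite /hinge le_max lexx. Qed.

Lemma ge_hinge a t : t - a <= hinge a t.
Proof. by rewrite /hinge le_max lexx orbT. Qed.

Lemma hinge_eq0 a t : t <= a -> hinge a t = 0.
Proof. by move=> ta; rewrite /hinge max_l // subr_le0. Qed.

Lemma ler_hinge a x y : x <= y -> hinge a x <= hinge a y.
Proof. by move=> xy; rewrite /hinge le_max2 // lerB. Qed.

Lemma hinge_convex a x y l : 0 <= l -> l <= 1 ->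
  hinge a (l * x + (1 - l) * y) <= l * hinge a x + (1 - l) * hinge a y.
Proof.
move=> l0 l1; have := hinge_ge0 a x; have := hinge_ge0 a y.
have := ge_hinge a x; have := ge_hinge a y.
by rewrite /hinge ge_max => *; apply/andP; split; nra.
Qed.

Lemma continuous_hinge a : continuous (hinge a).
Proof.
have : continuous (cst (0 : R) \max (fun t => t - a)).
  apply: max_fun_continuous => [|t]; first exact: cst_continuous.
  by apply: cvgB; [exact: cvg_id|exact: cvg_cst].
by move=> h t; exact: h.
Qed.

End Hinge.

Section HingeSeries.
Variable R : realType.
Variables (a c : nat -> R).
Hypothesis c_ge0 : forall k, 0 <= c k.
Hypothesis a_ge : forall k, k.+1%:R <= a k.

Definition hinge_psum (N : nat) (t : R) := t + \sum_(k < N) c k * hinge (a k) t.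

(* All kinks a_k with k >= trunc t lie beyond t, so this truncation is
   the full series. *)
Definition hinge_series (t : R) := hinge_psum (Num.truncn t) t.

Lemma hinge_psumS N t :
  hinge_psum N.+1 t = hinge_psum N t + c N * hinge (a N) t.
Proof. by rewrite /hinge_psum big_ord_recr addrA. Qed.

Lemma hinge_psumD N d t : (forall k, (N <= k)%N -> t <= a k) ->
  hinge_psum (N + d) t = hinge_psum N t.
Proof.
move=> ta; elim: d => [|d IH]; first by rewrite addn0.
by rewrite addnS hinge_psumS hinge_eq0 ?ta ?leq_addr // mulr0 addr0.
Qed.

Lemma ler_hinge_psum N M t : (N <= M)%N -> hinge_psum N t <= hinge_psum M t.
Proof.
move=> /subnK <-; rewrite addnC; elim: (M - N)%N => [|d IH]; first by rewrite addn0.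
rewrite addnS hinge_psumS; apply: le_trans IH _.
by rewrite lerDl mulr_ge0 ?hinge_ge0.
Qed.

Lemma kink_gt_trunc t k : (Num.truncn t <= k)%N -> t < a k.
Proof.
by move=> tk; apply: lt_le_trans (truncnS_gt t) (le_trans _ (a_ge k)); rewrite ler_nat.
Qed.

Lemma hinge_seriesE N t : (forall k, (N <= k)%N -> t <= a k) ->
  hinge_series t = hinge_psum N t.
Proof.
move=> ta; have tt k : (Num.truncn t <= k)%N -> t <= a k.
  by move=> /kink_gt_trunc/ltW.
set M := maxn N (Num.truncn t).
rewrite /hinge_series -(hinge_psumD (M - Num.truncn t) tt) subnKC ?leq_maxr //.
by rewrite -(hinge_psumD (M - N) ta) subnKC ?leq_maxl.
Qed.

Lemma hinge_seriesE_max (x y : R) :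
  hinge_series x = hinge_psum (maxn (Num.truncn x) (Num.truncn y)) x.
Proof.
by apply: hinge_seriesE => k /(leq_trans (leq_maxl _ _))/kink_gt_trunc/ltW.
Qed.

Lemma hinge_psum_le_series N t : hinge_psum N t <= hinge_series t.
Proof.
rewrite (hinge_seriesE (N := maxn N (Num.truncn t))) ?ler_hinge_psum ?leq_maxl //.
by move=> k /(leq_trans (leq_maxr _ _))/kink_gt_trunc/ltW.
Qed.

Lemma hinge_series_ge_id t : t <= hinge_series t.
Proof. by apply: le_trans (hinge_psum_le_series 0 t); rewrite /hinge_psum big_ord0 addr0. Qed.

Lemma continuous_hinge_psum N : continuous (hinge_psum N).
Proof.
elim: N => [|N IH] t.
  rewrite (_ : hinge_psum 0 = id); first exact: cvg_id.
  by apply/funext => x; rewrite /hinge_psum big_ord0 addr0.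
rewrite (_ : hinge_psum N.+1 = fun x => hinge_psum N x + c N * hinge (a N) x).
  by apply: cvgD; [exact: IH|apply: cvgM; [exact: cvg_cst|exact: continuous_hinge]].
by apply/funext => x; rewrite hinge_psumS.
Qed.

Lemma continuous_hinge_series : continuous hinge_series.
Proof.
move=> x; set N := (Num.truncn x).+1.
have near_psum : {near x, hinge_psum N =1 hinge_series}.
  near=> t; apply/esym/hinge_seriesE => k Nk; apply: ltW.
  have tx : t < x + 1 by near: t; apply: lt_nbhsl; lra.
  have Nk1 : N%:R + 1 <= k.+1%:R :> R by rewrite natr1 ler_nat.
  have := truncnS_gt x; rewrite -/N; have := a_ge k; lra.
apply: cvg_trans (near_eq_cvg near_psum) _.
rewrite (hinge_seriesE (N := N)); first exact: continuous_hinge_psum.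
by move=> k /ltnW /kink_gt_trunc /ltW.
Unshelve. all: by end_near.
Qed.

Lemma hinge_psum_convex N x y l : 0 <= l -> l <= 1 ->
  hinge_psum N (l * x + (1 - l) * y) <= l * hinge_psum N x + (1 - l) * hinge_psum N y.
Proof.
move=> l0 l1; rewrite /hinge_psum [l * (_ + _)]mulrDr [(1 - l) * (_ + _)]mulrDr addrACA lerD2l.
rewrite !mulr_sumr -big_split /= ler_sum // => k _.
by rewrite [l * (_ * _)]mulrCA [(1 - l) * (_ * _)]mulrCA -mulrDr ler_wpM2l ?hinge_convex.
Qed.

Lemma hinge_series_convex x y l : 0 <= l -> l <= 1 ->
  hinge_series (l * x + (1 - l) * y) <= l * hinge_series x + (1 - l) * hinge_series y.
Proof.
move=> l0 l1; set N := maxn (Num.truncn x) (Num.truncn y).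
rewrite (hinge_seriesE_max x y) (hinge_seriesE_max y x) (maxnC (Num.truncn y)) -/N.
rewrite (hinge_seriesE (N := N)); first exact: hinge_psum_convex.
move=> k Nk.
have xa := kink_gt_trunc (leq_trans (leq_maxl _ _) Nk).
have ya := kink_gt_trunc (leq_trans (leq_maxr _ _) Nk).
nra.
Qed.

Lemma hinge_series_incr x y : x < y -> hinge_series x < hinge_series y.
Proof.
move=> xy; rewrite (hinge_seriesE_max x y) (hinge_seriesE_max y x) (maxnC (Num.truncn y)).
rewrite /hinge_psum; apply: ltr_leD => //; apply: ler_sum => k _.
by rewrite ler_wpM2l // ler_hinge // ltW.
Qed.

End HingeSeries.

Lemma integral_itv_ge1_infty (R : realType) (f : R -> R) (b : nat -> R) :
  measurable_fun (`[1%R, +oo[ : set R) (EFin \o f) ->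
  (forall t, 1 <= t -> 0 <= f t) ->
  (forall n, 1 <= b n) ->
  (forall n t, b n <= t <= b n + 1 -> n%:R <= f t) ->
  (\int[lebesgue_measure]_(t in `[1%R, +oo[) (f t)%:E = +oo)%E.
Proof.
move=> mf f0 b1 fb.
have int_ge n : (n%:R%:E <= \int[lebesgue_measure]_(t in `[1%R, +oo[) (f t)%:E)%E.
  set I := [set` `[b n, b n + 1]].
  have mI : measurable I by exact: measurable_itv.
  have sI : I `<=` `[1%R, +oo[.
    by move=> t; rewrite /I /= !in_itv /= andbT => /andP[tb _]; have := b1 n; lra.
  have leb1 : (lebesgue_measure I = 1)%E.
    by rewrite lebesgue_measure_itv /= lte_fin ltrDl ltr01 -EFinB addrAC subrr add0r.
  have f0I : forall t, [set` `[1%R, +oo[] t -> (0 <= (EFin \o f) t)%E.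
    by move=> t; rewrite /= in_itv /= andbT => t1; rewrite lee_fin f0.
  have fbI : forall t, I t -> (cst n%:R%:E t <= (EFin \o f) t)%E.
    by move=> t; rewrite /I /= in_itv /= => tb; rewrite lee_fin fb.
  apply: le_trans (ge0_subset_integral lebesgue_measure mI (measurable_itv _) mf f0I sI).
  rewrite -[X in (X <= _)%E]mule1 -leb1 -integral_cst //.
  apply: (ge0_le_integral lebesgue_measure mI _ (measurable_cst _) _ fbI).
    by move=> t _; rewrite lee_fin.
  exact: measurable_funS (measurable_itv _) sI mf.
move: int_ge; case: (\int[_]_(_ in _) _)%E => [r| |] // int_ge.
  exfalso; have := int_ge (Num.truncn r).+1; rewrite lee_fin; have := truncnS_gt r; lra.
by have := int_ge 0%N.
Qed.

Lemma limf_einf_pinfty_eq1 (R : realType) (f : R -> R) (u : nat -> R) :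
  (forall t, 1 < t -> 1 <= f t) ->
  (forall j, j.+1%:R <= u j) ->
  (forall j, f (u j) <= 1 + j.+1%:R^-1) ->
  limf_einf (fun t => (f t)%:E) (pinfty_nbhs R) = 1%E.
Proof.
move=> f_ge1 u_ge fu_le; rewrite limf_einfE; apply/eqP; rewrite eq_le; apply/andP; split.
- apply: ge_ereal_sup => _ [V [M [Mr MV]] <-].
  apply/lee_addgt0Pr => e e0.
  set j := maxn (Num.truncn M) (Num.truncn e^-1).
  have Mu : M < u j.
    apply: lt_le_trans (truncnS_gt M) (le_trans _ (u_ge j)).
    by rewrite ler_nat ltnS leq_maxl.
  apply: le_trans (ereal_inf_lbound _) _; first by exists (u j); [exact: MV|].
  rewrite lee_fin; apply: le_trans (fu_le j) _; rewrite lerD2l invf_ple ?posrE //.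
  by apply/ltW/(lt_le_trans (truncnS_gt e^-1)); rewrite ler_nat ltnS leq_maxr.
- apply: le_trans (ereal_sup_ubound _); last by exists [set t | 1 < t]; first by exists 1.
  by apply: le_ereal_inf_tmp => _ [t t1 <-]; rewrite lee_fin f_ge1.
Qed.

Section Construction.
Variable R : realType.

Definition slope_at (j : nat) (x : R) := expR (j%:R * (x + 2) ^+ 2).

Fixpoint kink_mass (j : nat) : R * R :=
  match j with
  | 0 => (1, 1)
  | j'.+1 => let: (a, s) := kink_mass j' in
             let s' := s + slope_at j' a in (s' ^+ j'.+1 + a + 1, s')
  end.

Definition kink j := (kink_mass j).1.
Definition mass j := (kink_mass j).2.
Definition slope j := slope_at j (kink j).

Lemma massS j : mass j.+1 = mass j + slope j.
Proof. by rewrite /mass /slope /kink /=; case: kink_mass. Qed.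

Lemma kinkS j : kink j.+1 = mass j.+1 ^+ j.+1 + kink j + 1.
Proof. by rewrite /mass /kink /=; case: kink_mass. Qed.

Lemma slope_gt0 j : 0 < slope j.
Proof. exact: expR_gt0. Qed.

Lemma massE j : mass j = 1 + \sum_(k < j) slope k.
Proof. by elim: j => [|j IH]; rewrite ?big_ord0 ?addr0 // massS IH big_ord_recr addrA. Qed.

Lemma mass_ge1 j : 1 <= mass j.
Proof. by rewrite massE lerDl sumr_ge0 // => k _; rewrite ltW ?slope_gt0. Qed.

Lemma kinkS_ge j : kink j + 1 <= kink j.+1.
Proof. by rewrite kinkS lerD2r lerDr exprn_ge0 // (le_trans ler01 (mass_ge1 _)). Qed.

Lemma kink_ge j : j.+1%:R <= kink j.
Proof.
elim: j => [|j IH]; first by rewrite /kink.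
by apply: le_trans (kinkS_ge j); rewrite -natr1 lerD2r.
Qed.

Lemma kink_ge1 j : 1 <= kink j.
Proof. by apply: le_trans (kink_ge j); rewrite ler1n. Qed.

Lemma ler_kink : {homo kink : k m / (k <= m)%N >-> k <= m}.
Proof. by apply/nondecreasing_seqP => j; apply: le_trans (kinkS_ge j); rewrite lerDl. Qed.

Lemma slope_ge0 j : 0 <= slope j.
Proof. exact/ltW/slope_gt0. Qed.

Definition Phi := hinge_series kink slope.

Lemma Phi_ge_id t : t <= Phi t.
Proof. exact: hinge_series_ge_id slope_ge0 kink_ge t. Qed.

Lemma slope_le_Phi n t : kink n + 1 <= t -> slope n <= Phi t.
Proof.
move=> nt; apply: le_trans (hinge_psum_le_series slope_ge0 kink_ge n.+1 t).
rewrite hinge_psumS.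
have psum_ge0 : 0 <= hinge_psum kink slope n t.
  rewrite /hinge_psum addr_ge0 ?sumr_ge0 // => [|k _].
    by have := kink_ge1 n; lra.
  by rewrite mulr_ge0 ?slope_ge0 ?hinge_ge0.
have hinge_ge1 : 1 <= hinge (kink n) t by apply: le_trans (ge_hinge _ _); lra.
have := slope_ge0 n; nra.
Qed.

Lemma lnPhi_div_sqr_ge n t : kink n + 1 <= t <= kink n + 1 + 1 ->
  n%:R <= ln (Phi t) / t ^+ 2.
Proof.
move=> /andP[lo hi]; have := kink_ge1 n => a1.
have t0 : 0 < t by lra.
have : ln (slope n) <= ln (Phi t).
  by rewrite ler_ln ?posrE ?slope_le_Phi ?slope_gt0 ?(lt_le_trans t0 (Phi_ge_id t)).
rewrite /slope /slope_at expRK ler_pdivlMr ?exprn_gt0 //; apply: le_trans.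
rewrite ler_wpM2l // ler_sqr ?nnegrE; lra.
Qed.

Lemma lnPhi_div_ln_ge1 t : 1 < t -> 1 <= ln (Phi t) / ln t.
Proof.
move=> t1; have lnt0 : 0 < ln t by exact: ln_gt0.
rewrite ler_pdivlMr // mul1r ler_ln ?posrE ?Phi_ge_id //; first lra.
by apply: lt_le_trans (Phi_ge_id t); lra.
Qed.

Lemma Phi_kink_le j : Phi (kink j) <= kink j * mass j.
Proof.
rewrite /Phi (hinge_seriesE slope kink_ge (N := j)) => [|k]; last exact: ler_kink.
rewrite /hinge_psum massE mulrDr mulr1 lerD2l mulr_sumr ler_sum // => k _.
rewrite mulrC ler_wpM2r ?slope_ge0 // /hinge ge_max (le_trans ler01 (kink_ge1 j)) /=.
by rewrite gerBl (le_trans ler01 (kink_ge1 k)).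
Qed.

Lemma lnPhi_div_ln_kink_le j :
  ln (Phi (kink j.+1)) / ln (kink j.+1) <= 1 + j.+1%:R^-1.
Proof.
set t := kink j.+1; set s := mass j.+1.
have t2 : 2 <= t by have := kinkS_ge j; have := kink_ge1 j; lra.
have lnt0 : 0 < ln t by apply: ln_gt0; lra.
have s1 : 1 <= s := mass_ge1 j.+1.
have lnPhi_le : ln (Phi t) <= ln t + ln s.
  rewrite -lnM ?posrE 1?ler_ln ?posrE ?Phi_kink_le ?mulr_gt0 //; try lra.
  by apply: lt_le_trans (Phi_ge_id t); lra.
have lns_le : ln s * j.+1%:R <= ln t.
  rewrite mulr_natr -lnXn; last lra.
  rewrite ler_ln ?posrE ?exprn_gt0 //; try lra.
  by rewrite /t kinkS -/s -addrA lerDl; have := kink_ge1 j; lra.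
rewrite ler_pdivrMr // mulrDl mul1r; apply: le_trans lnPhi_le _.
by rewrite lerD2l mulrC ler_pdivlMr.
Qed.

Lemma continuous_Phi : continuous Phi.
Proof. exact: continuous_hinge_series slope kink_ge. Qed.

Lemma measurable_lnPhi_div_sqr :
  measurable_fun (`[1%R, +oo[ : set R) (EFin \o fun t => ln (Phi t) / t ^+ 2).
Proof.
apply/measurable_EFinP.
apply: (measurable_funS (measurable_itv `]0%R, +oo[)).
  by move=> t; rewrite /= !in_itv /= !andbT; lra.
apply: open_continuous_measurable_fun; first exact: itv_open_ends_open.
move=> t; rewrite inE /= in_itv /= andbT => t0.
apply: (@continuousM _ _ (fun t => ln (Phi t)) (fun t => (t ^+ 2)^-1)).
  apply: continuous_comp; first exact: continuous_Phi.
  by apply: continuous_ln; apply: lt_le_trans t0 (Phi_ge_id t).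
apply: (@continuousV _ _ (fun t : R => t ^+ 2)); first by rewrite expf_neq0 ?gt_eqF.
by apply: (@continuousM _ _ id id); exact: cvg_id.
Qed.

Lemma Phi_increasing : increasing_on_ge1 Phi.
Proof. by move=> x y _; exact: hinge_series_incr slope_ge0 kink_ge x y. Qed.

Lemma Phi_convex : convex_on_ge1 Phi.
Proof.
move=> x y l _ _ l0 l1.
by have := hinge_series_convex slope_ge0 kink_ge x y l0 l1.
Qed.

Lemma integral_lnPhi_div_sqr :
  (\int[lebesgue_measure]_(t in `[1%R, +oo[) (ln (Phi t) / t ^+ 2)%:E = +oo)%E.
Proof.
apply: (integral_itv_ge1_infty (b := fun n => kink n + 1) measurable_lnPhi_div_sqr).
- by move=> t t1; rewrite divr_ge0 ?sqr_ge0 // ln_ge0 // (le_trans t1 (Phi_ge_id t)).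
- by move=> n; have := kink_ge1 n; lra.
- exact: lnPhi_div_sqr_ge.
Qed.

Lemma liminf_lnPhi_div_ln :
  limf_einf (fun t => (ln (Phi t) / ln t)%:E) (pinfty_nbhs R) = 1%E.
Proof.
have kinkS_gt j : j.+1%:R <= kink j.+1 := le_trans (kink_ge j) (ler_kink (leqnSn j)).
exact: limf_einf_pinfty_eq1 lnPhi_div_ln_ge1 kinkS_gt lnPhi_div_ln_kink_le.
Qed.

End Construction.

Theorem lemma6p11 (R : realType) :
  exists Phi : R -> R,
    {within `[1, +oo[, continuous Phi} /\
    increasing_on_ge1 Phi /\
    convex_on_ge1 Phi /\
    (forall t : R, 1 <= t -> 1 <= Phi t) /\
    (\int[lebesgue_measure]_(t in `[1%R, +oo[) (ln (Phi t) / t ^+ 2)%:E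
       = +oo)%E /\
    limf_einf (fun t : R => (ln (Phi t) / ln t)%:E) (pinfty_nbhs R) = 1%E /\
    (forall t : R, 1 <= t -> t <= Phi t).
Proof.
exists (@Phi R); split; first exact/continuous_subspaceT/continuous_Phi.
split; first exact: Phi_increasing.
split; first exact: Phi_convex.
split; first by move=> t t1; apply: le_trans t1 (Phi_ge_id t).
split; first exact: integral_lnPhi_div_sqr.
split; first exact: liminf_lnPhi_div_ln.
by move=> t _; exact: Phi_ge_id.
Qed.
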